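(* Let $(\mathcal G_t)\subseteq(\mathcal F_t)$ be a filtration, $(\rho^n)_{n\ge1}\subset\tilde{\mathcal A}^\circ(\mathcal G_t)$ and $\rho\in\tilde{\mathcal A}^\circ(\mathcal G_t)$ with $$\mathbb P\big(\{\omega:\lim_{n\to\infty}\rho^n_t(\omega)=\rho_t(\omega)\text{ for all }t\in C_\rho(\omega)\cup\{T\}\}\big)=1.$$ Let $\theta$ be an $\mathcal F$-measurable random variable with values in $(0,T]$ and $X$ an $\mathcal F$-measurable random variable with values in $[0,\infty)$ and $\mathbb E[X]<\infty$. Then $$\limsup_{n\to\infty}\mathbb E\Big[\int_{[0,T]}1_{\{t\ge\theta\}}X\,d\rho^n_t\Big]\le\mathbb E\Big[\int_{[0,T]}1_{\{t\ge\theta\}}X\,d\rho_t\Big].$$ If moreover $\mathbb P(\{\omega:\theta(\omega)\in C_\rho(\omega)\text{ or }X(\omega)=0\})=1$, then the limit exists and equality holds.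
   Context: $(\Omega,\mathcal F,\mathbb P)$ complete probability space with filtration $(\mathcal F_t)_{t\in[0,T]}$, $T\in(0,\infty]$. $\tilde{\mathcal A}^\circ(\mathcal G_t)$ is the set of $(\mathcal G_t)$-adapted processes $\rho$ with, for all $\omega$, $t\mapsto\rho_t(\omega)$ càdlàg non-decreasing, $\rho_{0-}=0$ and $\rho_T\le1$. For a càdlàg process $X$, $C_X(\omega)=\{t\in[0,T]:X_{t-}(\omega)=X_t(\omega)\}$. Integrals are pathwise Lebesgue–Stieltjes. *)

From HB Require Import structures.
From mathcomp Require Import all_boot all_order all_algebra.
From mathcomp Require Import all_classical all_reals all_analysis measurable_realfun.
Set Implicit Arguments. Unset Strict Implicit. Unset Printing Implicit Defensive.
Import Order.TTheory GRing.Theory Num.Theory.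
Import numFieldNormedType.Exports.
Local Open Scope classical_set_scope.
Local Open Scope ring_scope.

Section Defs.
Context (R : realType).

(* Time is indexed by extended reals; the time set is [0,T] with T in (0,+oo]. *)

(* Turn a proof of cumulativity into a Lebesgue-Stieltjes measure
   (fallback: zero measure when F is not cumulative -- never used under
   our hypotheses). *)
Definition ls_measure (F : R -> R) :
    {measure set (g_sigma_algebraType R.-ocitv.-measurable) -> \bar R} :=
  match pselect (nondecreasing F /\ right_continuous F) with
  | left H => lebesgue_stieltjes_measure
                (HB.pack F (isCumulative.Build R _ R F (proj1 H) (proj2 H)))
  | right _ => mzero
  end.

(* A path t |-> f t on [0,T], extended to R by 0 on (-oo,0) and by f T after T
   (the convention f_{0-} = 0). *)
Definition ext_path (T : \bar R) (f : \bar R -> R) (x : R) : R :=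
  if x < 0 then 0 else if (x%:E <= T)%E then f x%:E else f T.

Definition leftlim (f : \bar R -> R) (t : \bar R) : R :=
  match t with
  | r%:E => if r <= 0 then 0 else lim (f x%:E @[x --> r^'-])
  | +oo%E => lim (f x%:E @[x --> +oo])
  | -oo%E => 0
  end.

Definition contset (T : \bar R) (f : \bar R -> R) : set (\bar R) :=
  [set t | (0 <= t)%E /\ (t <= T)%E /\ leftlim f t = f t].

(* Pathwise Lebesgue-Stieltjes integral \int_{[0,T]} g(t) df_t of a
   nonnegative integrand: the finite part of [0,T] is integrated against the
   LS measure of the extended path (which carries the atom f_0 - f_{0-} = f_0
   at 0); if T = +oo the atom f_oo - f_{oo-} at +oo is added. *)
Definition LSint (T : \bar R) (f : \bar R -> R) (g : \bar R -> \bar R) : \bar R :=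
  ((\int[ls_measure (ext_path T f)]_(x in [set x : R | (0 <= x)%R /\ (x%:E <= T)%E]) g x%:E)
   + (if T == +oo%E then g +oo%E * (f +oo%E - leftlim f +oo%E)%:E else 0))%E.

Definition filtration d (Omega : measurableType d) (T : \bar R)
    (F : \bar R -> set (set Omega)) : Prop :=
  (forall t, (0 <= t)%E -> (t <= T)%E ->
     sigma_algebra setT (F t) /\ F t `<=` measurable) /\
  (forall s t, (0 <= s)%E -> (s <= t)%E -> (t <= T)%E -> F s `<=` F t).

Definition Atilde0 d (Omega : measurableType d) (T : \bar R)
    (G : \bar R -> set (set Omega)) (rho : Omega -> \bar R -> R) : Prop :=
  (forall t, (0 <= t)%E -> (t <= T)%E ->
     forall B : set R, measurable B -> (fun w => rho w t) @^-1` B \in G t) /\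
  forall w,
    (* rho_{0-} = 0 <= rho_0 (non-decreasing from the value 0 at 0-) *)
    0 <= rho w 0%E /\
    (forall s t, (0 <= s)%E -> (s <= t)%E -> (t <= T)%E -> rho w s <= rho w t) /\
    (forall r : R, 0 <= r -> (r%:E < T)%E ->
       rho w x%:E @[x --> r^'+] --> rho w r%:E) /\
    (forall r : R, 0 < r -> (r%:E <= T)%E -> cvg (rho w x%:E @[x --> r^'-])) /\
    (T = +oo%E -> cvg (rho w x%:E @[x --> +oo])) /\
    rho w T <= 1.

End Defs.

From HB Require Import structures.
From mathcomp Require Import all_boot all_order all_algebra.
From mathcomp Require Import all_classical all_reals all_analysis measurable_realfun.
From mathcomp Require Import lra.
Import Order.TTheory GRing.Theory Num.Theory.
Import numFieldNormedType.Exports.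
Local Open Scope classical_set_scope.
Local Open Scope ring_scope.

Set Implicit Arguments. Unset Strict Implicit. Unset Printing Implicit Defensive.

(* The integrand t |-> X 1_{t >= theta} is a step, so pathwise the
   Lebesgue-Stieltjes integral is X (rho_T - rho_{theta-}) (Lemma
   [LSint_step]): it only sees the value of the path at T and its left limit
   at theta.  Since rho^n_T -> rho_T, everything reduces to the left limits:
   - liminf_n rho^n_{theta-} >= rho_{theta-}, because the continuity points
     of rho are dense (a monotone function has countably many jumps), rho^n
     converges there, and rho^n_{theta-} >= rho^n_c for c < theta;
   - if theta is a continuity point, limsup_n rho^n_{theta-} <= rho^n_theta
     -> rho_theta = rho_{theta-}.
   The payoffs are measurable (the left limit at theta is a supremum over
   rational times) and dominated by the integrable X, so the reverse Fatou
   lemma gives the first claim and dominated convergence the second. *)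

Section lebesgue_stieltjes_intervals.
Context {R : realType} (F : cumulative R R).
Local Notation mu := (lebesgue_stieltjes_measure F).

Lemma cumulative_left_cvg (r : R) : cvg (F x @[x --> r^'-]).
Proof.
have ndF := @cumulative_is_nondecreasing _ _ _ F.
apply: nondecreasing_at_left_is_cvgr; apply: nearW => x.
  by move=> u v _ _; exact: ndF.
exists (F r) => z [y]; rewrite /= in_itv /= => /andP[_ /ltW yr] <-; exact: ndF.
Qed.

Lemma lebesgue_stieltjes_itvoc (a b : R) : a <= b -> mu `]a, b] = (F b - F a)%:E.
Proof.
move=> ab; rewrite /lebesgue_stieltjes_measure /measure_extension/=.
by rewrite measurable_mu_extE/= ?wlength_itv_bnd//; exact: is_ocitv.
Qed.

Lemma cvg_at_left_seq (f : R -> R) (r l : R) : f x @[x --> r^'-] --> l ->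
  f (r - n.+1%:R^-1) @[n --> \oo] --> l.
Proof.
move/cvg_at_leftP; apply; split => [n|]; first by rewrite ltrBlDr ltrDl invr_gt0.
rewrite -[X in _ --> X]subr0; apply: cvgB; first exact: cvg_cst.
exact: (@cvg_harmonic R).
Qed.

Lemma itvcc_bigcap (r b : R) :
  `[r, b]%classic = \bigcap_n `]r - n.+1%:R^-1, b]%classic.
Proof.
apply/seteqP; split => x.
  rewrite /= in_itv /= => /andP[rx xb] n _ /=; rewrite in_itv /= xb andbT.
  by rewrite (lt_le_trans _ rx)// ltrBlDr ltrDl invr_gt0.
move=> /= h; rewrite in_itv /=.
have := h 0%N I; rewrite /= in_itv /= => /andP[_ ->]; rewrite andbT.
rewrite leNgt; apply/negP => xr.
have := h (Num.truncn ((r - x)^-1)) I; rewrite /= in_itv /= => /andP[+ _].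
rewrite ltrBlDr -ltrBlDl ltNge => /negP; apply.
rewrite -[X in _ <= X]invrK lef_pV2 ?posrE ?invr_gt0 ?ltr0n ?subr_gt0//.
exact/ltW/truncnS_gt.
Qed.

(* The measure of [r, b] is F b - F (r-): continuity from above of mu. *)
Lemma lebesgue_stieltjes_itvcc (r b : R) : r <= b ->
  mu `[r, b] = (F b - lim (F x @[x --> r^'-]))%:E.
Proof.
move=> rb; set I := fun n : nat => `]r - n.+1%:R^-1, b]%classic.
have rnb n : r - n.+1%:R^-1 <= b by rewrite (le_trans _ rb)// lerBlDr lerDl.
have muI : (mu \o I) @ \oo --> mu (\bigcap_n I n).
  apply: nonincreasing_cvg_mu.
  - by rewrite /= lebesgue_stieltjes_itvoc ?ltry.
  - by move=> n; exact: measurable_itv.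
  - by apply: bigcap_measurable => [|n _]; [exists 0%N|exact: measurable_itv].
  - move=> n m nm; apply/subsetPset => x; rewrite /I /= !in_itv /= => /andP[h ->].
    by rewrite andbT (le_lt_trans _ h)// lerB// lef_pV2 ?posrE ?ler_nat.
rewrite itvcc_bigcap; suff muIE : (mu \o I) @ \oo --> (F b - lim (F x @[x --> r^'-]))%:E.
  exact: (cvg_unique _ muI muIE).
apply: cvg_EFin.
  by apply: nearW => n; rewrite /= lebesgue_stieltjes_itvoc.
have -> : fine \o (mu \o I) = fun n => F b - F (r - n.+1%:R^-1).
  by apply/funext => n; rewrite /= lebesgue_stieltjes_itvoc.
apply: cvgB; first exact: cvg_cst.
exact/cvg_at_left_seq/cumulative_left_cvg.
Qed.

(* The measure of [r, +oo[ is F (+oo) - F (r-): continuity from below of mu. *)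
Lemma lebesgue_stieltjes_itvcy (r l : R) : F x @[x --> +oo] --> l ->
  mu `[r, +oo[ = (l - lim (F x @[x --> r^'-]))%:E.
Proof.
move=> Fl; set I := fun n : nat => `[r, r + n%:R]%classic.
have I_cover : `[r, +oo[%classic = \bigcup_n I n.
  apply/seteqP; split => x; last by move=> [n _]; rewrite /I /= !in_itv /= andbT => /andP[].
  rewrite /= in_itv /= andbT => rx; exists (Num.truncn (x - r)).+1 => //=.
  by rewrite /I /= in_itv /= rx -lerBlDl ltW// truncnS_gt.
have muI : (mu \o I) @ \oo --> mu (\bigcup_n I n).
  apply: nondecreasing_cvg_mu.
  - by move=> n; exact: measurable_itv.
  - by apply: bigcup_measurable => n _; exact: measurable_itv.
  - move=> n m nm; apply/subsetPset => x; rewrite /I /= !in_itv /= => /andP[-> h].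
    by rewrite (le_trans h)// lerD2l ler_nat.
rewrite I_cover; suff muIE : (mu \o I) @ \oo --> (l - lim (F x @[x --> r^'-]))%:E.
  exact: (cvg_unique _ muI muIE).
apply: cvg_EFin.
  by apply: nearW => n; rewrite /= lebesgue_stieltjes_itvcc// lerDl.
have -> : fine \o (mu \o I) = fun n => F (r + n%:R) - lim (F x @[x --> r^'-]).
  by apply/funext => n; rewrite /= lebesgue_stieltjes_itvcc ?lerDl.
apply: cvgB; last exact: cvg_cst.
apply: (cvg_comp _ _ _ Fl); apply/cvgryPge => M; near=> n.
by rewrite -lerBlDl; near: n; exact: nbhs_infty_ger.
Unshelve. all: by end_near. Qed.

End lebesgue_stieltjes_intervals.

Section regular_paths.
Context {R : realType}.
Implicit Types (T th : \bar R) (f : \bar R -> R).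

Definition regular_path T f : Prop :=
  0 <= f 0%E /\
  (forall s t, (0 <= s)%E -> (s <= t)%E -> (t <= T)%E -> f s <= f t) /\
  (forall r : R, 0 <= r -> (r%:E < T)%E -> f x%:E @[x --> r^'+] --> f r%:E) /\
  (forall r : R, 0 < r -> (r%:E <= T)%E -> cvg (f x%:E @[x --> r^'-])) /\
  (T = +oo%E -> cvg (f x%:E @[x --> +oo])) /\
  f T <= 1.

Lemma regular_path_ge0 T f t : regular_path T f ->
  (0 <= t)%E -> (t <= T)%E -> 0 <= f t.
Proof. by move=> [f0 [nd _]] t0 tT; apply: le_trans f0 (nd _ _ _ t0 tT). Qed.

Lemma ext_path_nondecreasing T f : (0 < T)%E -> regular_path T f ->
  nondecreasing (ext_path T f).
Proof.
move=> T0 pf x y xy; have [_ [nd _]] := pf; rewrite /ext_path.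
have fT : 0 <= f T := regular_path_ge0 pf (ltW T0) (lexx T).
have [x0|] := ltP x 0.
  case: ifPn => // y0; case: ifPn => // yT.
  by apply: (regular_path_ge0 pf); rewrite // lee_fin leNgt.
move=> x0; rewrite ltNge (le_trans x0 xy) /=.
case: ifPn => xT; case: ifPn => yT //; first by apply: nd; rewrite ?lee_fin.
- by apply: nd; rewrite ?lee_fin.
- by move: xT; rewrite (le_trans _ yT)// lee_fin.
Qed.

Lemma ext_path_right_continuous T f : (0 < T)%E -> regular_path T f ->
  right_continuous (ext_path T f).
Proof.
move=> T0 [_ [_ [rc _]]] x; rewrite /ext_path.
have [x0|x0] := ltP x 0.
  by apply: cvg_near_cst; near=> y; rewrite ifT//; near: y; exact: nbhs_right_lt.
have [xT|Tx] := ltP x%:E T.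
  rewrite ifT ?ltW//; apply: cvg_trans (rc x x0 xT); apply: near_eq_cvg.
  have yT : \forall y \near x^'+, (y%:E <= T)%E.
    case: T xT {T0 rc} => [t||] //= xt; last by apply: nearW => y; rewrite leey.
    by near=> y; rewrite lee_fin; near: y; apply: nbhs_right_le; rewrite -lte_fin.
  near=> y; rewrite ifF; last first.
    by apply/negbTE; rewrite -leNgt (le_trans x0)// ltW//; near: y; exact: nbhs_right_gt.
  by rewrite ifT//; near: y.
apply: cvg_near_cst; near=> y.
have xy : x < y by near: y; exact: nbhs_right_gt.
rewrite ifF; last by apply/negbTE; rewrite -leNgt (le_trans x0)// ltW.
rewrite ifF; last by apply/negbTE; rewrite -ltNge (le_lt_trans Tx)// lte_fin.
by case: ifPn => // xT; rewrite (_ : x%:E = T)//; apply/eqP; rewrite eq_le xT.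
Unshelve. all: by end_near. Qed.

End regular_paths.

Definition left_nbhs {R : realType} (th : \bar R) : set_system R :=
  if th is r%:E then r^'- else pinfty_nbhs R.

Global Instance left_nbhs_proper_filter {R : realType} (th : \bar R) :
  ProperFilter (left_nbhs th).
Proof. by case: th => [r||] /=; [exact: at_left_proper_filter|exact: proper_pinfty_nbhs..]. Qed.

Section left_limits.
Context {R : realType}.
Implicit Types (T th : \bar R) (f : \bar R -> R).

Lemma leftlimE f th : (0 < th)%E -> leftlim f th = lim (f x%:E @[x --> left_nbhs th]).
Proof. by case: th => [r||] //=; rewrite lte_fin => r0; rewrite leNgt r0. Qed.

Lemma near_left_nbhs th (s : R) : (s%:E < th)%E ->
  \forall x \near left_nbhs th, s < x /\ (x%:E < th)%E.
Proof.
case: th => [r||] //= sr; near=> x.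
  by split; [near: x; exact: nbhs_left_gt | rewrite lte_fin; near: x; exact: nbhs_left_lt].
by split; [near: x; exact: nbhs_pinfty_gt | exact: ltry].
Unshelve. all: by end_near. Qed.

Lemma leftlim_cvg T f th : regular_path T f -> (0 < th)%E -> (th <= T)%E ->
  f x%:E @[x --> left_nbhs th] --> leftlim f th.
Proof.
move=> [_ [_ [_ [lc [ic _]]]]] th0 thT; rewrite leftlimE//.
case: th th0 thT => [r||] //= r0 rT; first exact: lc.
by apply: ic; apply/eqP; rewrite eq_le leey.
Qed.

Section regular_path_leftlim.
Variables (T : \bar R) (f : \bar R -> R) (th : \bar R).
Hypotheses (pf : regular_path T f) (th0 : (0 < th)%E) (thT : (th <= T)%E).

Lemma le_leftlim (s : R) : 0 <= s -> (s%:E < th)%E -> f s%:E <= leftlim f th.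
Proof.
move=> s0 sth; have [_ [nd _]] := pf.
rewrite leftlimE//; apply: limr_ge; first exact: cvgP (leftlim_cvg pf th0 thT).
near=> x; have [sx xth] : s < x /\ (x%:E < th)%E by near: x; exact: near_left_nbhs.
by apply: nd; [rewrite lee_fin|rewrite lee_fin ltW|exact: le_trans (ltW xth) thT].
Unshelve. all: by end_near. Qed.

Lemma leftlim_le : leftlim f th <= f th.
Proof.
have [_ [nd _]] := pf.
rewrite leftlimE//; apply: limr_le; first exact: cvgP (leftlim_cvg pf th0 thT).
near=> x; have [x0 xth] : 0 < x /\ (x%:E < th)%E by near: x; exact: near_left_nbhs.
by apply: nd; [rewrite lee_fin ltW|exact: ltW|].
Unshelve. all: by end_near. Qed.

Lemma leftlim_approx (e : R) : 0 < e ->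
  exists s, [/\ 0 <= s, (s%:E < th)%E & leftlim f th - e < f s%:E].
Proof.
move=> e0; have := leftlim_cvg pf th0 thT.
move=> /cvgrPdist_lt /(_ e e0) near_e.
have : \forall x \near left_nbhs th,
    (0 < x /\ (x%:E < th)%E) /\ `|leftlim f th - f x%:E| < e.
  by apply: filterI near_e; exact: near_left_nbhs.
case/filter_ex => x [[x0 xth]]; rewrite ltr_distlC => /andP[lt_x _].
by exists x; split => //; exact: ltW.
Qed.

Lemma leftlim_ge0 : 0 <= leftlim f th.
Proof. by apply: le_trans (le_leftlim (lexx 0) th0); case: pf. Qed.

Lemma leftlim_le_end : leftlim f th <= f T.
Proof.
by apply: le_trans leftlim_le _; have [_ [nd _]] := pf; apply: nd; [exact: ltW|exact: thT|exact: lexx].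
Qed.

End regular_path_leftlim.
End left_limits.

Section pathwise_integral.
Context {R : realType}.

Lemma measurable_time_domain (T : \bar R) :
  measurable [set x : R | 0 <= x /\ (x%:E <= T)%E].
Proof.
case: T => [t||].
- rewrite (_ : [set x | _] = `[0, t]%classic); first exact: measurable_itv.
  by apply/seteqP; split => x /=; rewrite in_itv /= lee_fin; [move=> [-> ->]|move/andP].
- rewrite (_ : [set x | _] = `[0, +oo[%classic); first exact: measurable_itv.
  by apply/seteqP; split => x /=; rewrite in_itv /= leey andbT; [case|].
- rewrite (_ : [set x | _] = set0)//; apply/seteqP; split => x //= [_].
  by rewrite leeNy_eq.
Qed.

Variables (T : \bar R) (f : \bar R -> R).
Hypotheses (T0 : (0 < T)%E) (pf : regular_path T f).

Local Notation D := [set x : R | 0 <= x /\ (x%:E <= T)%E].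

Lemma ext_path_leftlim (r : R) : 0 < r -> (r%:E <= T)%E ->
  ext_path T f x @[x --> r^'-] --> leftlim f r%:E.
Proof.
move=> r0 rT; apply: cvg_trans (leftlim_cvg pf _ rT) => //.
apply: near_eq_cvg; near=> x; rewrite /ext_path ifF; last first.
  by apply/negbTE; rewrite -leNgt ltW//; near: x; exact: nbhs_left_gt.
by rewrite ifT// (le_trans _ rT)// lee_fin; near: x; exact: nbhs_left_le.
Unshelve. all: by end_near. Qed.

Lemma ext_path_mass (G : cumulative R R) (r : R) : G =1 ext_path T f ->
  0 < r -> (r%:E <= T)%E ->
  lebesgue_stieltjes_measure G (`[r, +oo[ `&` D) =
    ((if T == +oo%E then leftlim f +oo%E else f T) - leftlim f r%:E)%:E.
Proof.
move=> GE r0 rT; have Gr : lim (G x @[x --> r^'-]) = leftlim f r%:E.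
  by apply: cvg_lim => //; under eq_fun do rewrite GE; exact: ext_path_leftlim.
have [_ [_ [_ [_ [ic _]]]]] := pf.
case: T T0 pf rT ic GE => [t||] //= _ _ rt ic GE.
  rewrite (_ : _ `&` _ = `[r, t]%classic); last first.
    apply/seteqP; split => x /=; rewrite !in_itv /= ?andbT lee_fin; first by move=> [-> [_ ->]].
    by move=> /andP[rx ->]; split => //; rewrite (le_trans _ rx)// ltW.
  rewrite lebesgue_stieltjes_itvcc -?lee_fin// Gr GE /ext_path ifF ?lexx//.
  by apply/negbTE; rewrite -leNgt (le_trans (ltW r0))// -lee_fin.
rewrite (_ : _ `&` _ = `[r, +oo[%classic); last first.
  apply/seteqP; split => x /=; rewrite !in_itv /= ?andbT; first by move=> [].
  by move=> rx; rewrite leey; split => //; rewrite (le_trans _ rx)// ltW.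
rewrite (@lebesgue_stieltjes_itvcy _ _ _ (leftlim f +oo%E)) ?Gr//.
apply: cvg_trans (ic erefl); apply: near_eq_cvg; near=> x.
rewrite GE /ext_path ifF ?leey//; apply/negbTE; rewrite -leNgt; near: x.
exact: nbhs_pinfty_ge.
Unshelve. all: by end_near. Qed.

Lemma LSint_step (th : \bar R) (c : R) : (0 < th)%E -> (th <= T)%E -> 0 <= c ->
  LSint T f (fun t => if (th <= t)%E then c%:E else 0%E) = (c * (f T - leftlim f th))%:E.
Proof.
move=> th0 thT c0; rewrite /LSint /ls_measure; case: pselect => [H|[]]; last first.
  by split; [exact: ext_path_nondecreasing | exact: ext_path_right_continuous].
set G := (X in lebesgue_stieltjes_measure X); have GE : G =1 ext_path T f by [].
case: th th0 thT => [r||] // r0 rT; last first.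
  have TE : T = +oo%E by apply/eqP; rewrite eq_le leey rT.
  by rewrite integral0_eq// add0e TE eqxx EFinM.
rewrite lte_fin in r0.
under eq_integral => x _.
  have -> : (if (r%:E <= x%:E)%E then c%:E else 0%E) = (c * \1_(`[r, +oo[%classic) x)%:E.
    by rewrite indicE mem_setE in_itv /= andbT lee_fin; case: ifP; rewrite ?mulr1 ?mulr0.
  over.
have mD := measurable_time_domain T.
rewrite integralZl_indic//; last first.
  by move=> c_lt0; move: c0; rewrite leNgt c_lt0.
rewrite integral_indic// leey.
set m := (X in (c%:E * X + _)%E); have mE : m = _ := ext_path_mass GE r0 rT.
rewrite mE -EFinM; case: ifPn => [/eqP TE|_]; last by rewrite adde0.
by rewrite TE -EFinD -mulrDr addrC addrA subrK.
Qed.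

End pathwise_integral.

Section continuity_points.
Context {R : realType}.

Lemma countable_avoids_itv (a b : R) (S : set R) : a < b -> countable S ->
  exists x, a < x < b /\ ~ S x.
Proof.
move=> ab cS; apply: contrapT => /forallNP noS.
have abS : `]a, b[%classic `<=` S.
  by move=> x /= xab; have /not_andP[|/contrapT] := noS x.
have /(@countable_lebesgue_measure0 R) : countable `]a, b[%classic.
  by apply: sub_countable cS; exact: subset_card_le.
rewrite lebesgue_measure_itv /= lte_fin ab -EFinB => /eqP; rewrite eqe subr_eq0.
by move/eqP => ba; move: ab; rewrite ba ltxx.
Qed.

Lemma contset_dense T (f : \bar R -> R) (a b : R) : regular_path T f ->
  0 <= a -> a < b -> (b%:E <= T)%E -> exists c, a < c < b /\ contset T f c%:E.
Proof.
move=> [_ [nd [rc [lc _]]]] a0 ab bT.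
have ndf : {in `[a, b] &, nondecreasing_fun (fun x => f x%:E)}.
  move=> x y; rewrite !in_itv /= => /andP[ax _] /andP[_ yb] xy.
  by apply: nd; rewrite ?lee_fin// ?(le_trans a0)// (le_trans _ bT)// lee_fin.
have [c [/andP[ac cb] not_disc]] := countable_avoids_itv ab (discontinuity_countable ndf).
have c0 : 0 < c by apply: le_lt_trans ac.
have cT : (c%:E < T)%E by apply: lt_le_trans bT; rewrite lte_fin.
exists c; split; first by rewrite ac cb.
split; first by rewrite lee_fin ltW.
split; first exact: ltW.
rewrite /leftlim leNgt c0 /= -(cvg_lim _ (rc c (ltW c0) cT))//.
apply: contrapT => neq; apply: not_disc; split; first by rewrite /= in_itv /= ac cb.
split; [exact: lc c c0 (ltW cT)| |exact/eqP].
by apply/cvg_ex; exists (f c%:E); exact: rc c (ltW c0) cT.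
Qed.

End continuity_points.

Definition cvg_on_contset {R : realType} (T : \bar R) (fn : nat -> \bar R -> R)
    (f : \bar R -> R) : Prop :=
  forall t, contset T f t \/ t = T -> (fun n => fn n t) @ \oo --> f t.

Section limn_esup_facts.
Context {R : realType}.

Lemma le_limn_esup (u v : (\bar R)^nat) : (forall n, (u n <= v n)%E) ->
  (limn_esup u <= limn_esup v)%E.
Proof.
move=> uv; rewrite !limn_esup_lim; apply: lee_lim; try exact: is_cvg_esups.
apply: nearW => n; apply: ge_ereal_sup => _ [k /= kn <-].
by apply: le_trans (uv k) _; apply: ereal_sup_ubound; exists k.
Qed.

Lemma limn_esup_ge0 (u : (\bar R)^nat) : (forall n, (0 <= u n)%E) ->
  (0 <= limn_esup u)%E.
Proof.
move=> u0; rewrite limn_esup_lim; apply: lime_ge; first exact: is_cvg_esups.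
apply: nearW => n; apply: le_trans (u0 n) _.
by apply: ereal_sup_ubound; exists n => /=.
Qed.

End limn_esup_facts.

Section cvg_leftlim.
Context {R : realType}.
Variables (T : \bar R) (fn : nat -> \bar R -> R) (f : \bar R -> R) (th : \bar R).
Hypotheses (pfn : forall n, regular_path T (fn n)) (pf : regular_path T f)
  (fn_f : cvg_on_contset T fn f) (th0 : (0 < th)%E) (thT : (th <= T)%E).

(* Lower semicontinuity of the left limit: liminf_n fn_{th-} >= f_{th-}.
   Approximate f_{th-} by f_c at a continuity point c < th, where
   fn_c -> f_c and fn_c <= fn_{th-}. *)
Lemma leftlim_liminf (e : R) : 0 < e ->
  \forall n \near \oo, leftlim f th - e < leftlim (fn n) th.
Proof.
move=> e0; have e20 : 0 < e / 2 by rewrite divr_gt0.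
have [s [s0 sth fs_near]] := leftlim_approx pf th0 thT e20.
have [b [sb bth bT]] : exists b, [/\ s < b, (b%:E <= th)%E & (b%:E <= T)%E].
  move: sth thT; case: th => [r||] //= sr rT; first by exists r; rewrite -lte_fin.
  by exists (s + 1); rewrite ltrDl leey (le_trans _ rT)// leey.
have [c [/andP[sc cb] cC]] := contset_dense pf s0 sb bT.
have cth : (c%:E < th)%E by apply: lt_le_trans bth; rewrite lte_fin.
have fsc : f s%:E <= f c%:E.
  have [_ [nd _]] := pf; apply: nd; rewrite ?lee_fin ?(ltW sc)//.
  by apply: le_trans bT; rewrite lee_fin ltW.
have := fn_f (or_introl cC) => /cvgrPdist_lt /(_ _ e20).
apply: filterS => n; rewrite ltr_distlC => /andP[fnc _].
have := le_leftlim (pfn n) th0 thT (le_trans s0 (ltW sc)) cth.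
by move: fs_near fsc fnc; lra.
Qed.

(* Upper semicontinuity at a continuity point: limsup_n fn_{th-} <= f_{th-}
   because fn_{th-} <= fn_th -> f_th = f_{th-}. *)
Lemma leftlim_limsup (e : R) : contset T f th -> 0 < e ->
  \forall n \near \oo, leftlim (fn n) th < leftlim f th + e.
Proof.
move=> thC e0; have [_ [_ fth]] := thC; rewrite fth.
have := fn_f (or_introl thC) => /cvgrPdist_lt /(_ _ e0).
apply: filterS => n; rewrite ltr_distlC => /andP[_ fnth].
by apply: le_lt_trans fnth; exact: leftlim_le.
Qed.

Lemma cvg_min_leftlim :
  Num.min (leftlim (fn n) th) (leftlim f th) @[n --> \oo] --> leftlim f th.
Proof.
apply/cvgrPdist_lt => e e0; apply: filterS (leftlim_liminf e0).
move=> n fn_near; rewrite ltr_distlC; apply/andP; split.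
  by rewrite lt_min fn_near ltrBlDr ltrDl.
apply: (@le_lt_trans _ _ (leftlim f th)); first by rewrite ge_min lexx orbT.
by rewrite ltrDl.
Qed.

Lemma cvg_leftlim_contset : contset T f th ->
  leftlim (fn n) th @[n --> \oo] --> leftlim f th.
Proof.
move=> thC; apply/cvgrPdist_lt => e e0.
apply: filterS2 (leftlim_liminf e0)
  (leftlim_limsup thC e0) => n lo hi.
by rewrite ltr_distlC lo.
Qed.

Lemma limsup_step_mass (x : R) : 0 <= x ->
  (limn_esup (fun n => (x * (fn n T - leftlim (fn n) th))%:E) <=
   (x * (f T - leftlim f th))%:E)%E.
Proof.
move=> x0; pose v n := x * (fn n T - Num.min (leftlim (fn n) th) (leftlim f th)).
apply: le_trans (le_limn_esup (v := fun n => (v n)%:E) _) _.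
  by move=> n; rewrite lee_fin ler_wpM2l// lerB// ge_min lexx.
have v_cvg : (fun n => (v n)%:E) @ \oo --> (x * (f T - leftlim f th))%:E.
  apply: cvg_EFin; first exact: nearW.
  apply: cvgM; first exact: cvg_cst.
  by apply: cvgB; [exact: fn_f (or_intror erefl) | exact: cvg_min_leftlim].
by rewrite limn_esup_lim (cvg_lim _ (cvg_esups v_cvg)).
Qed.

Lemma cvg_step_mass (x : R) : contset T f th \/ x = 0 ->
  x * (fn n T - leftlim (fn n) th) @[n --> \oo] --> x * (f T - leftlim f th).
Proof.
case=> [thC|->]; last by under eq_fun do rewrite mul0r; rewrite mul0r; exact: cvg_cst.
apply: cvgM; first exact: cvg_cst.
by apply: cvgB; [exact: fn_f (or_intror erefl) | exact: cvg_leftlim_contset].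
Qed.

End cvg_leftlim.

Section measurable_leftlim.
Context {R : realType}.

Lemma measurable_fun_ereal_sup_rat d (Omega : measurableType d)
    (g : rat -> Omega -> \bar R) : (forall q, measurable_fun setT (g q)) ->
  measurable_fun setT (fun w => ereal_sup (range (g ^~ w))).
Proof.
move=> mg _; apply: (measurability _ (ErealGenOInfty.measurableE R)) => //.
move=> _ [_ [x ->] <-].
rewrite (_ : _ @^-1` _ = \bigcup_q (g q) @^-1` `]x%:E, +oo[%classic); last first.
  rewrite predeqE => w; split => /=; rewrite in_itv /= andbT.
    by move=> /ereal_sup_gt[_ [/= q _ <-]] xg; exists q => //=; rewrite in_itv /= xg.
  move=> -[q _] /=; rewrite in_itv /= andbT => /lt_le_trans; apply.
  by apply: ereal_sup_ubound; exists q.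
rewrite setTI; apply: bigcupT_measurable_rat => q.
by rewrite -[X in measurable X]setTI; apply: mg => //; exact: emeasurable_itv.
Qed.

Lemma rat_between (s : R) (th : \bar R) : (s%:E < th)%E ->
  exists q : rat, s < ratr q /\ ((ratr q)%:E < th)%E.
Proof.
case: th => [r||] //= sr.
  have /(@rat_in_itvoo R)[q] : s < r by rewrite -lte_fin.
  by rewrite in_itv /= => /andP[sq qr]; exists q; rewrite lte_fin.
have /(@rat_in_itvoo R)[q] : s < s + 1 by rewrite ltrDl.
by rewrite in_itv /= => /andP[sq _]; exists q; rewrite ltry.
Qed.

Definition rat_values (f : \bar R -> R) (th : \bar R) (q : rat) : R :=
  if (0 <= ratr q :> R) && ((ratr q)%:E < th)%E then f (ratr q)%:E else 0.

Lemma leftlim_rat_sup T f th : regular_path T f -> (0 < th)%E -> (th <= T)%E ->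
  (leftlim f th)%:E = ereal_sup (range (fun q => (rat_values f th q)%:E)).
Proof.
move=> pf th0 thT; apply/eqP; rewrite eq_le; apply/andP; split; last first.
  apply: ge_ereal_sup => _ [q _ <-]; rewrite lee_fin /rat_values.
  case: ifP => [/andP[q0 qth]|_]; first exact: (le_leftlim pf).
  exact: (leftlim_ge0 pf).
apply/lee_addgt0Pr => e e0.
have [s [s0 sth fs_near]] := leftlim_approx pf th0 thT e0.
have [q [sq qth]] := rat_between sth.
have q0 : 0 <= ratr q :> R by rewrite (le_trans s0)// ltW.
have fsq : f s%:E <= f (ratr q)%:E.
  have [_ [nd _]] := pf; apply: nd; rewrite ?lee_fin ?(ltW sq)//.
  exact: le_trans (ltW qth) thT.
apply: (@le_trans _ _ ((f (ratr q)%:E)%:E + e%:E)%E).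
  by rewrite -EFinD lee_fin; move: fs_near fsq; lra.
rewrite leeD2r//; apply: ereal_sup_ubound; exists q => //.
by rewrite /rat_values q0 qth.
Qed.

Lemma measurable_leftlim d (Omega : measurableType d) T (rho : Omega -> \bar R -> R)
    (theta : Omega -> \bar R) : (forall w, regular_path T (rho w)) ->
  (forall t, (0 <= t)%E -> (t <= T)%E -> measurable_fun setT (fun w => rho w t)) ->
  measurable_fun setT theta -> (forall w, (0 < theta w)%E /\ (theta w <= T)%E) ->
  measurable_fun setT (fun w => leftlim (rho w) (theta w)).
Proof.
move=> pf mrho mth hth; apply/measurable_EFinP.
rewrite (_ : EFin \o _ = fun w => ereal_sup (range (fun q => (rat_values (rho w) (theta w) q)%:E))).
  apply: measurable_fun_ereal_sup_rat => q; apply/measurable_EFinP; rewrite /rat_values.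
  have [q0|_] := boolP (0 <= ratr q :> R); last exact: measurable_cst.
  have [qT|Tq] := boolP ((ratr q)%:E < T)%E.
    apply: measurable_fun_ifT; first by apply: measurable_fun_lte => //; exact: measurable_cst.
      by apply: mrho; rewrite ?lee_fin// ltW.
    exact: measurable_cst.
  rewrite (_ : (fun w => _) = cst 0); first exact: measurable_cst.
  apply/funext => w; rewrite ifF//; apply/negbTE; rewrite /= -leNgt.
  by apply: le_trans (hth w).2 _; rewrite leNgt.
by apply/funext => w /=; rewrite (leftlim_rat_sup (pf w) (hth w).1 (hth w).2).
Qed.

End measurable_leftlim.

Section reverse_fatou.
Context {R : realType} d (T : measurableType d) (mu : {measure set T -> \bar R}).

(* The suprema of the tails
   sup_{k >= n} f_k are dominated by g and decrease to limsup f_n, so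
   dominated convergence applies to them. *)
Lemma reverse_fatou (f : (T -> \bar R)^nat) (g : T -> R) :
  (forall n, measurable_fun setT (f n)) ->
  (forall n x, (0 <= f n x <= (g x)%:E)%E) ->
  mu.-integrable setT (EFin \o g) ->
  (limn_esup (fun n => \int[mu]_x f n x) <= \int[mu]_x limn_esup (f ^~ x))%E.
Proof.
move=> mf f_bnd ig; pose G n x := esups (f ^~ x) n.
have G_bnd n x : (0 <= G n x <= (g x)%:E)%E.
  have /andP[f0 fg] := f_bnd n x; apply/andP; split.
    by apply: le_trans f0 _; apply: ereal_sup_ubound; exists n => /=.
  by apply: ge_ereal_sup => _ [k _ <-]; have /andP[] := f_bnd k x.
have G_cvg : (fun n => \int[mu]_x G n x)%E @ \oo --> (\int[mu]_x limn_esup (f ^~ x))%E.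
  apply: (@dominated_cvg _ _ _ mu setT measurableT G _ (EFin \o g)) => //.
  - exact: measurable_fun_esups.
  - by move=> x _; rewrite limn_esup_lim; exact: is_cvg_esups.
  - by move=> n x _; rewrite gee0_abs; have /andP[] := G_bnd n x.
rewrite -(cvg_limn_einf_sup G_cvg).2; apply: le_limn_esup => n.
apply: ge0_le_integral => //.
- by move=> x _; have /andP[] := f_bnd n x.
- exact: measurable_fun_esups.
- by move=> x _; apply: ereal_sup_ubound; exists n => /=.
Qed.

End reverse_fatou.

Section step_payoff.
Context {R : realType} d (Omega : measurableType d) (P : probability Omega R).
Variables (T : \bar R) (G : \bar R -> set (set Omega)).
Variables (rhon : nat -> Omega -> \bar R -> R) (rho : Omega -> \bar R -> R).
Variables (theta : Omega -> \bar R) (X : Omega -> R).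
Hypotheses (T0 : (0 < T)%E) (HG : filtration T G).
Hypotheses (Hn : forall n, Atilde0 T G (rhon n)) (H : Atilde0 T G rho).
Hypothesis rhon_rho : {ae P, forall w, cvg_on_contset T (fun n => rhon n w) (rho w)}.
Hypotheses (mth : measurable_fun setT theta)
  (hth : forall w, (0 < theta w)%E /\ (theta w <= T)%E).
Hypotheses (mX : measurable_fun setT X) (X0 : forall w, 0 <= X w)
  (iX : P.-integrable setT (EFin \o X)).

Definition step_payoff (r : Omega -> \bar R -> R) (w : Omega) : R :=
  X w * (r w T - leftlim (r w) (theta w)).

Lemma LSint_step_payoff r w : regular_path T (r w) ->
  LSint T (r w) (fun t => if (theta w <= t)%E then (X w)%:E else 0%E) =
  (step_payoff r w)%:E.
Proof. by move=> pr; rewrite (LSint_step T0 pr (hth w).1 (hth w).2 (X0 w)). Qed.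

(* Since 0 <= r_{theta-} <= r_T <= 1, the payoff lies between 0 and X. *)
Lemma step_payoff_bounds r w : regular_path T (r w) ->
  (0 <= (step_payoff r w)%:E <= (X w)%:E)%E.
Proof.
move=> pr; have [th0 thT] := hth w; rewrite !lee_fin.
have l0 := leftlim_ge0 pr th0 thT; have lT := leftlim_le_end pr th0 thT.
have [_ [_ [_ [_ [_ r1]]]]] := pr.
have := X0 w; rewrite /step_payoff => x0; apply/andP; split; nra.
Qed.

Lemma Atilde0_measurable r t : Atilde0 T G r -> (0 <= t)%E -> (t <= T)%E ->
  measurable_fun setT (r ^~ t).
Proof.
move: HG => [HGt _] [adapted _] t0 tT _ B mB; rewrite setTI.
by apply: (HGt t t0 tT).2; rewrite -inE; exact: adapted.
Qed.

Lemma measurable_step_payoff r : Atilde0 T G r ->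
  measurable_fun setT (fun w => (step_payoff r w)%:E).
Proof.
move=> Hr; apply/measurable_EFinP; apply: measurable_funM => //.
apply: measurable_funB; first exact: Atilde0_measurable Hr (ltW T0) (lexx T).
apply: measurable_leftlim => //; first by move=> w; exact: Hr.2.
by move=> t t0 tT; exact: Atilde0_measurable Hr t0 tT.
Qed.

(* First claim, for the payoffs: reverse Fatou, then the pathwise bound. *)
Lemma limsup_integral_step_payoff :
  (limn_esup (fun n => \int[P]_w (step_payoff (rhon n) w)%:E) <=
   \int[P]_w (step_payoff rho w)%:E)%E.
Proof.
have payoff_bnd n w := step_payoff_bounds ((Hn n).2 w).
apply: le_trans (reverse_fatou (fun n => measurable_step_payoff (Hn n)) payoff_bnd iX) _.
apply: ae_ge0_le_integral => //.
- by move=> w _; apply: limn_esup_ge0 => n; case/andP: (payoff_bnd n w).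
- by apply: measurable_fun_limn_esup => n; exact: measurable_step_payoff.
- by move=> w _; case/andP: (step_payoff_bounds (H.2 w)).
- exact: measurable_step_payoff.
apply: filterS rhon_rho => w fn_f _; rewrite /step_payoff.
exact (limsup_step_mass (fun n => (Hn n).2 w) (H.2 w) fn_f (hth w).1 (hth w).2 (X0 w)).
Qed.

(* Second claim, for the payoffs: dominated convergence. *)
Lemma cvg_integral_step_payoff :
  {ae P, forall w, contset T (rho w) (theta w) \/ X w = 0} ->
  (\int[P]_w (step_payoff (rhon n) w)%:E)%E @[n --> \oo] -->
  (\int[P]_w (step_payoff rho w)%:E)%E.
Proof.
move=> cont_or_0.
have payoff_cvg : {ae P, forall w, setT w ->
    (step_payoff (rhon n) w)%:E @[n --> \oo] --> (step_payoff rho w)%:E}.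
  apply: filterS2 rhon_rho cont_or_0 => w fn_f w_cont _.
  apply: cvg_EFin; first exact: nearW.
  exact (cvg_step_mass (fun n => (Hn n).2 w) (H.2 w) fn_f (hth w).1 (hth w).2 w_cont).
have payoff_dom : {ae P, forall w n, setT w ->
    (`|(step_payoff (rhon n) w)%:E| <= (EFin \o X) w)%E}.
  apply: aeW => w n _; have /andP[p0 pX] := step_payoff_bounds ((Hn n).2 w).
  by rewrite gee0_abs.
by have [] := dominated_convergence measurableT
  (fun n => measurable_step_payoff (Hn n)) (measurable_step_payoff H) payoff_cvg iX payoff_dom.
Qed.

End step_payoff.

Theorem mainTheorem18 (R : realType) (d : measure_display)
  (Omega : measurableType d) (P : probability Omega R)
  (T : \bar R) (F G : \bar R -> set (set Omega))
  (rhon : nat -> Omega -> \bar R -> R) (rho : Omega -> \bar R -> R)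
  (theta : Omega -> \bar R) (X : Omega -> R) :
  measure_is_complete P ->
  (0 < T)%E ->
  filtration T F -> filtration T G ->
  (forall t, (0 <= t)%E -> (t <= T)%E -> G t `<=` F t) ->
  (forall n, Atilde0 T G (rhon n)) ->
  Atilde0 T G rho ->
  {ae P, forall w, forall t, contset T (rho w) t \/ t = T ->
      (fun n => rhon n w t) @ \oo --> rho w t} ->
  measurable_fun setT theta ->
  (forall w, (0 < theta w)%E /\ (theta w <= T)%E) ->
  measurable_fun setT X ->
  (forall w, 0 <= X w) ->
  P.-integrable setT (EFin \o X) ->
  let I (r : Omega -> \bar R -> R) :=
    (\int[P]_w LSint T (r w) (fun t => if (theta w <= t)%E then (X w)%:E else 0%E))%E in
  (limn_esup (fun n => I (rhon n)) <= I rho)%E /\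
  ({ae P, forall w, contset T (rho w) (theta w) \/ X w = 0} ->
     (fun n => I (rhon n)) @ \oo --> I rho).
Proof.
move=> _ T0 _ HG _ Hn H rhon_rho mth hth mX X0 iX I.
have IE r : Atilde0 T G r -> I r = (\int[P]_w (step_payoff T theta X r w)%:E)%E.
  by move=> Hr; apply: eq_integral => w _; exact: LSint_step_payoff (Hr.2 w).
rewrite (IE _ H) (_ : (fun n => I (rhon n)) =
    fun n => \int[P]_w (step_payoff T theta X (rhon n) w)%:E)%E; last first.
  by apply/funext => n; exact: IE.
split; first exact: (limsup_integral_step_payoff T0 HG Hn H rhon_rho mth hth mX X0 iX).
exact: (cvg_integral_step_payoff T0 HG Hn H rhon_rho mth hth mX X0 iX).
Qed.
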